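(* Let $q \geq 1$ and let $k$ be a positive integer with $k < n$. Let $\boldsymbol{B}$ be a dictionary as described in the context, and assume that every signal $\boldsymbol{y} \in \mathbb{R}^D$ that admits a $k$-block-sparse representation admits a unique one. If $$\sqrt{\frac{1+\sigma_q}{1+\epsilon_q}}\;\zeta_k + \zeta_{k-1} < \frac{1-\epsilon_q}{1+\epsilon_q},$$ then for every $\Lambda_k \subseteq \{1,\dots,n\}$ with $|\Lambda_k| = k$ and every $\boldsymbol{y} \in \bigoplus_{i\in\Lambda_k}\mathcal{S}_i$, every optimal solution $\boldsymbol{c}^*$ of $P_{\ell_q/\ell_1}(\boldsymbol{y})$ satisfies $\boldsymbol{c}^*[i] = \boldsymbol{0}$ for all $i \notin \Lambda_k$; i.e. the solution of $P_{\ell_q/\ell_1}$ is equivalent to that of $P_{\ell_q/\ell_0}$.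
   Context: $\boldsymbol{B} = [\boldsymbol{B}[1]\ \cdots\ \boldsymbol{B}[n]] \in \mathbb{R}^{D\times N}$ has unit-Euclidean-norm columns, blocks $\boldsymbol{B}[i] \in \mathbb{R}^{D\times m_i}$ (possibly with linearly dependent columns); $\mathcal{S}_i = \operatorname{span}(\boldsymbol{B}[i])$ has dimension $d_i$, and $\mathcal{S}_i\cap\mathcal{S}_j = \{0\}$ for $i\ne j$. Vectors $\boldsymbol{c}\in\mathbb{R}^N$ are written $(\boldsymbol{c}[1];\dots;\boldsymbol{c}[n])$, $\boldsymbol{c}[i]\in\mathbb{R}^{m_i}$. A $k$-block-sparse representation of $\boldsymbol{y}$ is $\boldsymbol{y}=\sum_{i\in\Lambda}\boldsymbol{s}_i$ with $|\Lambda|\le k$, $\boldsymbol{s}_i\in\mathcal{S}_i\setminus\{0\}$; uniqueness means any two have the same $\Lambda$ and the same $\boldsymbol{s}_i$. $P_{\ell_q/\ell_1}(\boldsymbol{y})$: $\min \sum_i \|\boldsymbol{c}[i]\|_q$ s.t. $\boldsymbol{y}=\boldsymbol{B}\boldsymbol{c}$; $P_{\ell_q/\ell_0}(\boldsymbol{y})$: minimize the number of nonzero blocks $\boldsymbol{c}[i]$ s.t. $\boldsymbol{y}=\boldsymbol{B}\boldsymbol{c}$. Subspace coherence: $\mu(\mathcal{S}_i,\mathcal{S}_j)=\max_{0\ne\boldsymbol{x}\in\mathcal{S}_i,\,0\ne\boldsymbol{z}\in\mathcal{S}_j}\frac{|\boldsymbol{x}^\top\boldsymbol{z}|}{\|\boldsymbol{x}\|_2\|\boldsymbol{z}\|_2}$.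 $k$-cumulative subspace coherence: $\zeta_k = \max_{\Lambda_k}\max_{i\notin\Lambda_k}\sum_{j\in\Lambda_k}\mu(\mathcal{S}_i,\mathcal{S}_j)$, the outer max over all $k$-element subsets $\Lambda_k\subseteq\{1,\dots,n\}$, with $\zeta_0 = 0$. Intra-block $q$-restricted isometry constant $\epsilon_q$: the smallest constant such that for every $i$ there is a full column-rank submatrix $\bar{\boldsymbol{B}}[i]\in\mathbb{R}^{D\times d_i}$ of $\boldsymbol{B}[i]$ with $(1-\epsilon_q)\|\bar{\boldsymbol{c}}\|_q^2 \le \|\bar{\boldsymbol{B}}[i]\bar{\boldsymbol{c}}\|_2^2 \le (1+\epsilon_q)\|\bar{\boldsymbol{c}}\|_q^2$ for all $\bar{\boldsymbol{c}}\in\mathbb{R}^{d_i}$. Upper intra-block $q$-restricted isometry constant $\sigma_q$: the smallest constant such that $\|\boldsymbol{B}[i]\boldsymbol{c}[i]\|_2^2\le(1+\sigma_q)\|\boldsymbol{c}[i]\|_q^2$ for all $i$ and all $\boldsymbol{c}[i]$. *)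

From HB Require Import structures.
From mathcomp Require Import all_boot all_order all_algebra.
From mathcomp Require Import classical_sets reals exp.
Set Implicit Arguments. Unset Strict Implicit. Unset Printing Implicit Defensive.
Import Order.TTheory GRing.Theory Num.Theory.
Local Open Scope ring_scope.

Section Defs.
Variable R : realType.

Definition norm2 p (x : 'cV[R]_p) : R := Num.sqrt (\sum_(j < p) (x j 0) ^+ 2).

Definition normq (q : R) p (x : 'cV[R]_p) : R :=
  powR (\sum_(j < p) powR `|x j 0| q) q^-1.

Variables (D n : nat) (m : 'I_n -> nat) (B : forall i : 'I_n, 'M[R]_(D, m i)).

Definition inS (i : 'I_n) (x : 'cV[R]_D) : Prop := exists c : 'cV[R]_(m i), x = B i *m c.

Definition mu (i j : 'I_n) : R :=
  sup [set r : R | exists x z : 'cV[R]_D, [/\ inS i x, inS j z, x != 0, z != 0 &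
        r = `|(x^T *m z) 0 0| / (norm2 x * norm2 z)]]%classic.

(* k-cumulative subspace coherence (values are >= 0, so max with 0 is harmless) *)
Definition zeta (k : nat) : R :=
  \big[Num.max/0]_(L : {set 'I_n} | #|L| == k)
     \big[Num.max/0]_(i in ~: L) \sum_(j in L) mu i j.

Definition intra_rip (q e : R) : Prop :=
  forall i : 'I_n, exists f : 'I_(\rank (B i)) -> 'I_(m i),
    \rank (colsub f (B i)) = \rank (B i) /\
    forall cb : 'cV[R]_(\rank (B i)),
      (1 - e) * normq q cb ^+ 2 <= norm2 (colsub f (B i) *m cb) ^+ 2 <=
      (1 + e) * normq q cb ^+ 2.

Definition eps_q (q : R) : R := inf [set e : R | 0 <= e /\ intra_rip q e]%classic.

Definition upper_rip (q s : R) : Prop :=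
  forall (i : 'I_n) (c : 'cV[R]_(m i)), norm2 (B i *m c) ^+ 2 <= (1 + s) * normq q c ^+ 2.

Definition sigma_q (q : R) : R := inf [set s : R | 0 <= s /\ upper_rip q s]%classic.

Definition block_sparse_rep (k : nat) (y : 'cV[R]_D) (L : {set 'I_n})
  (s : 'I_n -> 'cV[R]_D) : Prop :=
  [/\ (#|L| <= k)%N, (forall i, i \in L -> inS i (s i) /\ s i != 0) &
      y = \sum_(i in L) s i].

Definition unique_block_sparse (k : nat) : Prop :=
  forall y L s L' s', block_sparse_rep k y L s -> block_sparse_rep k y L' s' ->
    L = L' /\ (forall i, i \in L -> s i = s' i).

Definition feasible (y : 'cV[R]_D) (c : forall i : 'I_n, 'cV[R]_(m i)) : Prop :=
  y = \sum_(i < n) B i *m c i.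

Definition objective (q : R) (c : forall i : 'I_n, 'cV[R]_(m i)) : R :=
  \sum_(i < n) normq q (c i).

Definition optimal_lq_l1 (q : R) (y : 'cV[R]_D) (c : forall i : 'I_n, 'cV[R]_(m i)) : Prop :=
  feasible y c /\ forall c', feasible y c' -> objective q c <= objective q c'.

End Defs.

(* Suppose some block [c i0], [i0 \notin L], of an optimal [c] is nonzero. Write
   [y = \sum_(i in L) t i] with [t i] in S_i and put [u i := t i - B i *m c i]; then
   [\sum_(i in L) u i = \sum_(j in ~: L) B j *m c j], and bounding each [<u i, u i>] through
   the subspace coherences gives
     (1 - zeta_{k-1}) sum_{i in L} |u_i|_2 <= zeta_k sum_{j notin L} |B_j c_j|_2.
   Writing [u i = B i *m v i] with [sqrt (1 - eps) |v_i|_q <= |u_i|_2], the vector [c + v]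
   restricted to [L] is feasible, so optimality and the triangle inequality for the l_q norm
   give [sum_{j notin L} |c_j|_q <= sum_{i in L} |v_i|_q], while
   [|B_j c_j|_2 <= sqrt (1 + sigma) |c_j|_q]. Chaining these estimates yields
   [sqrt (1 - eps) (1 - zeta_{k-1}) <= sqrt (1 + sigma) zeta_k], which the hypothesis rules
   out once [eps] and [sigma] are replaced by slightly larger admissible constants. *)

From Pilot Require Import Defs.
From HB Require Import structures.
From mathcomp Require Import all_boot all_order all_algebra.
From mathcomp Require Import classical_sets reals exp.
From mathcomp Require Import boolp convex hoelder interval_inference.
From mathcomp Require Import ring lra.
Import Order.TTheory GRing.Theory Num.Theory.
(* Re-imported so that [Defs.normq] shadows [rat.normq]. *)
Import Defs.
Set Implicit Arguments. Unset Strict Implicit. Unset Printing Implicit Defensive.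
Local Open Scope ring_scope.

Section LqNorm.
Variable R : realType.
Implicit Types (q : R) (p : nat).

Lemma powR_convex_comb q (l x y : R) : 1 <= q -> 0 <= l <= 1 -> 0 <= x -> 0 <= y ->
  powR (l * x + (1 - l) * y) q <= l * powR x q + (1 - l) * powR y q.
Proof.
move=> q1 /andP[l0 l1] x0 y0.
have := @convex_powR R q q1 (Itv01 l0 l1) x y.
rewrite !inE /= !in_itv /= !andbT => /(_ x0 y0).
by rewrite !convRE.
Qed.

Lemma powRK (a q : R) : 0 <= a -> q != 0 -> powR (powR a q) q^-1 = a.
Proof. by move=> a0 q0; rewrite -powRrM mulfV // powRr1. Qed.

Lemma powRKV (a q : R) : 0 <= a -> q != 0 -> powR (powR a q^-1) q = a.
Proof. by move=> a0 q0; rewrite -powRrM mulVf // powRr1. Qed.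

Definition sum_powq q p (x : 'cV[R]_p) : R := \sum_(j < p) powR `|x j 0| q.

Lemma normqE q p (x : 'cV[R]_p) : normq q x = powR (sum_powq q x) q^-1.
Proof. by []. Qed.

Lemma sum_powq_ge0 q p (x : 'cV[R]_p) : 0 <= sum_powq q x.
Proof. by apply: sumr_ge0 => j _; apply: powR_ge0. Qed.

Lemma powR_normq q p (x : 'cV[R]_p) : q != 0 -> powR (normq q x) q = sum_powq q x.
Proof. by move=> q0; rewrite powRKV // sum_powq_ge0. Qed.

Lemma normq_ge0 q p (x : 'cV[R]_p) : 0 <= normq q x.
Proof. exact: powR_ge0. Qed.

Lemma normq0 q p : q != 0 -> normq q (0 : 'cV[R]_p) = 0.
Proof.
move=> q0; rewrite /normq big1 ?powR0 ?invr_eq0 // => j _.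
by rewrite mxE normr0 powR0.
Qed.

Lemma normq_eq0 q p (x : 'cV[R]_p) : q != 0 -> normq q x = 0 -> x = 0.
Proof.
move=> q0 /powR_eq0_eq0/eqP; rewrite psumr_eq0 => [/allP x0|j _]; last exact: powR_ge0.
apply/matrixP => j k; rewrite ord1 mxE.
by move: (x0 j (mem_index_enum _)) => /eqP/powR_eq0_eq0/normr0_eq0.
Qed.

Lemma normq_le1 q p (x : 'cV[R]_p) : 0 < q -> (normq q x <= 1) = (sum_powq q x <= 1).
Proof.
move=> q0; have qV0 : 0 <= q^-1 by rewrite invr_ge0 ltW.
apply/idP/idP => x1.
  have := @ge0_ler_powR R q (ltW q0) (normq q x) 1.
  by rewrite powR_normq ?gt_eqF // powR1; apply; rewrite ?nnegrE ?normq_ge0.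
have := @ge0_ler_powR R q^-1 qV0 (sum_powq q x) 1.
by rewrite powR1; apply; rewrite ?nnegrE ?sum_powq_ge0.
Qed.

Lemma normqZ q p (a : R) (x : 'cV[R]_p) : 0 < q -> normq q (a *: x) = `|a| * normq q x.
Proof.
move=> q0; rewrite !normqE; have -> : sum_powq q (a *: x) = powR `|a| q * sum_powq q x.
  by rewrite /sum_powq mulr_sumr; apply: eq_bigr => j _; rewrite mxE normrM powRM.
by rewrite powRM ?powR_ge0 ?sum_powq_ge0 // powRK ?gt_eqF.
Qed.

Lemma normq_entry_le q p (x : 'cV[R]_p) j : 0 < q -> `|x j 0| <= normq q x.
Proof.
move=> q0; rewrite -(@powRK `|x j 0| q) ?gt_eqF //.
apply: ge0_ler_powR; rewrite ?invr_ge0 ?(ltW q0) ?nnegrE ?powR_ge0 ?sum_powq_ge0 //.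
by rewrite (bigD1 j) //= lerDl sumr_ge0 // => i _; apply: powR_ge0.
Qed.

(* By convexity of [t ^ q] on [0, +oo[. *)
Lemma normq_convex_le1 q p (l : R) (x y : 'cV[R]_p) : 1 <= q -> 0 <= l <= 1 ->
  normq q x <= 1 -> normq q y <= 1 -> normq q (l *: x + (1 - l) *: y) <= 1.
Proof.
move=> q1 /andP[l0 l1]; have q0 : 0 < q by apply: lt_le_trans q1.
move=> x1 y1; rewrite (normq_le1 _ q0).
rewrite (normq_le1 _ q0) in x1; rewrite (normq_le1 _ q0) in y1.
have l'0 : 0 <= 1 - l by rewrite subr_ge0.
apply: le_trans (_ : l * sum_powq q x + (1 - l) * sum_powq q y <= 1); last first.
  by rewrite -[leRHS](subrKC l 1); apply: lerD; apply: ler_piMr.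
rewrite /sum_powq !mulr_sumr -big_split /=; apply: ler_sum => j _.
apply: le_trans (powR_convex_comb _ _ _ _) => //; last by rewrite l0 l1.
apply: ge0_ler_powR; rewrite ?nnegrE ?addr_ge0 ?mulr_ge0 // ?(ltW q0) //.
by rewrite !mxE (le_trans (ler_normD _ _)) // !normrM (ger0_norm l0) (ger0_norm l'0).
Qed.

Lemma ler_normqD q p (x y : 'cV[R]_p) : 1 <= q ->
  normq q (x + y) <= normq q x + normq q y.
Proof.
move=> q1; have q0 : 0 < q by apply: lt_le_trans q1.
have qn0 : q != 0 by rewrite gt_eqF.
have [/(normq_eq0 qn0) ->|a0] := eqVneq (normq q x) 0.
  by rewrite add0r normq0 // add0r.
have [/(normq_eq0 qn0) ->|b0] := eqVneq (normq q y) 0.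
  by rewrite addr0 normq0 // addr0.
move Ea: (normq q x) a0 => a a0; move Eb: (normq q y) b0 => b b0.
have a_gt0 : 0 < a by rewrite lt_def a0 -Ea normq_ge0.
have b_gt0 : 0 < b by rewrite lt_def b0 -Eb normq_ge0.
have S_gt0 : 0 < a + b := addr_gt0 a_gt0 b_gt0.
(* [x + y] is [a + b] times a convex combination of the unit vectors [x / a] and [y / b]. *)
have -> : x + y = (a + b) *: (a / (a + b) *: (a^-1 *: x) + (1 - a / (a + b)) *: (b^-1 *: y)).
  rewrite scalerDr !scalerA.
  have -> : (a + b) * (a / (a + b)) * a^-1 = 1 by field; rewrite a0 (gt_eqF S_gt0).
  have -> : (a + b) * (1 - a / (a + b)) * b^-1 = 1 by field; rewrite b0 (gt_eqF S_gt0).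
  by rewrite !scale1r.
have t01 : 0 <= a / (a + b) <= 1.
  by rewrite divr_ge0 ?(ltW a_gt0) ?(ltW S_gt0) //= ler_pdivrMr // mul1r lerDl (ltW b_gt0).
rewrite normqZ // gtr0_norm //; apply: ler_piMr; first exact: ltW.
apply: normq_convex_le1 => //.
  by rewrite normqZ // gtr0_norm ?invr_gt0 // Ea mulVf.
by rewrite normqZ // gtr0_norm ?invr_gt0 // Eb mulVf.
Qed.

End LqNorm.

Section EuclideanNorm.
Variable R : realType.
Implicit Types (p : nat).

Lemma norm2_ge0 p (x : 'cV[R]_p) : 0 <= norm2 x.
Proof. exact: sqrtr_ge0. Qed.

Lemma sqr_norm2 p (x : 'cV[R]_p) : norm2 x ^+ 2 = \sum_j x j 0 ^+ 2.
Proof. by rewrite /norm2 sqr_sqrtr // sumr_ge0 // => j _; apply: sqr_ge0. Qed.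

Lemma dot_colE p (x z : 'cV[R]_p) : (x^T *m z) 0 0 = \sum_j x j 0 * z j 0.
Proof. by rewrite mxE; apply: eq_bigr => j _; rewrite mxE. Qed.

Lemma dot_colC p (x z : 'cV[R]_p) : (x^T *m z) 0 0 = (z^T *m x) 0 0.
Proof. by rewrite !dot_colE; apply: eq_bigr => j _; rewrite mulrC. Qed.

Lemma dot_col_sumr p (I : finType) (P : pred I) (x : 'cV[R]_p)
    (z : I -> 'cV[R]_p) :
  (x^T *m (\sum_(j | P j) z j)) 0 0 = \sum_(j | P j) (x^T *m z j) 0 0.
Proof. by rewrite mulmx_sumr summxE. Qed.

Lemma dot_colB p (x y z : 'cV[R]_p) :
  (x^T *m (y - z)) 0 0 = (x^T *m y) 0 0 - (x^T *m z) 0 0.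
Proof. by rewrite !dot_colE -sumrB; apply: eq_bigr => j _; rewrite !mxE mulrBr. Qed.

Lemma sqr_norm2_dot p (x : 'cV[R]_p) : norm2 x ^+ 2 = (x^T *m x) 0 0.
Proof. by rewrite sqr_norm2 dot_colE; apply: eq_bigr => j _; rewrite expr2. Qed.

Lemma norm2_0 p : norm2 (0 : 'cV[R]_p) = 0.
Proof. by rewrite /norm2 big1 ?sqrtr0 // => j _; rewrite mxE expr0n. Qed.

Lemma norm2_eq0 p (x : 'cV[R]_p) : norm2 x = 0 -> x = 0.
Proof.
move=> x0; have : \sum_j x j 0 ^+ 2 == 0 by rewrite -sqr_norm2 x0 expr0n.
rewrite psumr_eq0 => [/allP {}x0|j _]; last exact: sqr_ge0.
apply/matrixP => j k; rewrite ord1 mxE.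
by move: (x0 j (mem_index_enum _)); rewrite sqrf_eq0 => /eqP.
Qed.

Lemma norm2_gt0 p (x : 'cV[R]_p) : x != 0 -> 0 < norm2 x.
Proof. by move=> x0; rewrite lt_def norm2_ge0 andbT; apply: contraNneq x0 => /norm2_eq0 ->. Qed.

(* Cauchy-Schwarz, from [0 <= sum_j (x_j + t z_j)^2] at [t = - <x, z> / |z|^2]. *)
Lemma ler_dot_norm2 p (x z : 'cV[R]_p) : `|(x^T *m z) 0 0| <= norm2 x * norm2 z.
Proof.
have [->|z0] := eqVneq z 0; first by rewrite norm2_0 mulr0 mulmx0 mxE normr0.
have B_gt0 : 0 < norm2 z ^+ 2 by rewrite exprn_gt0 // norm2_gt0.
rewrite -ler_sqr ?nnegrE ?normr_ge0 ?mulr_ge0 ?norm2_ge0 //.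
rewrite exprMn real_normK ?num_real // dot_colE !sqr_norm2.
rewrite sqr_norm2 in B_gt0.
set A := \sum_j x j 0 ^+ 2; set B := \sum_j z j 0 ^+ 2 in B_gt0 *.
set C := \sum_j x j 0 * z j 0.
have quad t : A + 2 * t * C + t ^+ 2 * B = \sum_j (x j 0 + t * z j 0) ^+ 2.
  by rewrite /A /B /C !mulr_sumr -!big_split /=; apply: eq_bigr => j _; ring.
have : 0 <= A + 2 * (- C / B) * C + (- C / B) ^+ 2 * B.
  by rewrite quad; apply: sumr_ge0 => j _; apply: sqr_ge0.
have -> : A + 2 * (- C / B) * C + (- C / B) ^+ 2 * B = A - C ^+ 2 / B.
  by field; rewrite gt_eqF.
by rewrite subr_ge0 ler_pdivrMr // mulrC.
Qed.

End EuclideanNorm.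

Lemma exchange_big_setD1 (V : nmodType) (I : finType) (L : {set I}) (F : I -> I -> V) :
  \sum_(i in L) \sum_(i' in L :\ i) F i i' = \sum_(i' in L) \sum_(i in L :\ i') F i i'.
Proof.
rewrite (exchange_big_dep (mem L)) /=; last by move=> i j _; rewrite finset.in_setD1 => /andP[].
apply: eq_bigr => i' hi'; apply: eq_bigl => i.
by rewrite !finset.in_setD1 hi' andbT andbC eq_sym.
Qed.

Lemma big_setC_split (V : nmodType) (I : finType) (L : {set I}) (F : I -> V) :
  \sum_i F i = \sum_(i in L) F i + \sum_(i in ~: L) F i.
Proof.
rewrite (bigID (mem L)) /=; congr (_ + _).
by apply: eq_bigl => i; rewrite finset.in_setC.
Qed.

Section Coherence.
Variables (R : realType) (D n : nat) (m : 'I_n -> nat).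
Variable B : forall i : 'I_n, 'M[R]_(D, m i).

Lemma mu_sym i j : mu B i j = mu B j i.
Proof.
rewrite /mu; congr sup; apply/seteqP; split => r [x [z [xi zj x0 z0 ->]]];
  by exists z, x; split => //; rewrite dot_colC (mulrC (norm2 x)).
Qed.

Lemma mu_ge0 i j : 0 <= mu B i j.
Proof.
rewrite /mu; set S := (X in sup X).
have [supS|] := pselect (has_sup S); last by move=> /sup_out ->.
have [[r Sr] _] := supS; apply: le_trans (sup_upper_bound supS Sr).
by have [x [z [_ _ _ _ ->]]] := Sr; rewrite divr_ge0 ?mulr_ge0 ?norm2_ge0.
Qed.

Lemma ler_dot_mu i j (x z : 'cV[R]_D) : inS B i x -> inS B j z ->
  `|(x^T *m z) 0 0| <= mu B i j * norm2 x * norm2 z.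
Proof.
move=> xi zj.
have [->|x0] := eqVneq x 0; first by rewrite trmx0 mul0mx mxE normr0 norm2_0 mulr0 mul0r.
have [->|z0] := eqVneq z 0; first by rewrite mulmx0 mxE normr0 norm2_0 mulr0.
have nxz : 0 < norm2 x * norm2 z by rewrite mulr_gt0 ?norm2_gt0.
rewrite -mulrA -ler_pdivrMr //; apply: sup_upper_bound; last by exists x, z.
split; first by exists (`|(x^T *m z) 0 0| / (norm2 x * norm2 z)), x, z.
exists 1 => _ [x' [z' [_ _ x'0 z'0 ->]]].
by rewrite ler_pdivrMr ?mulr_gt0 ?norm2_gt0 // mul1r ler_dot_norm2.
Qed.

Lemma zeta_ge0 k : 0 <= zeta B k.
Proof. exact: bigmax_ge_id. Qed.

Lemma sum_mu_le_zeta k (L : {set 'I_n}) j : #|L| = k -> j \notin L ->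
  \sum_(i in L) mu B j i <= zeta B k.
Proof.
move=> cardL jL; apply: le_trans (le_bigmax_cond _ (fun L0 : {set 'I_n} =>
  \big[Num.max/0]_(i in ~: L0) \sum_(j0 in L0) mu B i j0) (_ : #|L| == k)); last first.
  by rewrite cardL.
by apply: (le_bigmax_cond _ (fun i => \sum_(j0 in L) mu B i j0)); rewrite inE.
Qed.

Section BlockSumIdentity.
Variables (L : {set 'I_n}) (u w : 'I_n -> 'cV[R]_D).
Hypothesis u_in : forall i, i \in L -> inS B i (u i).
Hypothesis w_in : forall j, j \notin L -> inS B j (w j).
Hypothesis sum_uw : \sum_(i in L) u i = \sum_(j in ~: L) w j.

Lemma norm2_le_mu_sum i : i \in L ->
  norm2 (u i) <= \sum_(j in ~: L) mu B i j * norm2 (w j) +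
                 \sum_(i' in L :\ i) mu B i i' * norm2 (u i').
Proof.
move=> iL; set rhs := (X in _ <= X).
have rhs_ge0 : 0 <= rhs.
  by rewrite addr_ge0 // sumr_ge0 // => j _; rewrite mulr_ge0 ?mu_ge0 ?norm2_ge0.
have ui_eq : u i = \sum_(j in ~: L) w j - \sum_(i' in L :\ i) u i'.
  by rewrite -sum_uw (big_setD1 i iL) /= addrK.
have : norm2 (u i) ^+ 2 <= norm2 (u i) * rhs.
  rewrite sqr_norm2_dot {2}ui_eq dot_colB !dot_col_sumr.
  apply: le_trans (ler_norm _) _; apply: le_trans (ler_normB _ _) _.
  rewrite /rhs mulrDr !mulr_sumr.
  apply: lerD; apply: le_trans (ler_norm_sum _ _ _) _; apply: ler_sum => j jL;
    rewrite mulrCA mulrA; apply: ler_dot_mu (u_in iL) _.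
  - by apply: w_in; rewrite finset.in_setC in jL.
  - by apply: u_in; rewrite finset.in_setD1 in jL; case/andP: jL.
have [->|ui_neq0] := eqVneq (norm2 (u i)) 0; first by [].
by rewrite expr2 ler_pM2l // lt_def ui_neq0 norm2_ge0.
Qed.

Lemma coherence_sum_bound k : #|L| = k ->
  (1 - zeta B k.-1) * \sum_(i in L) norm2 (u i) <= zeta B k * \sum_(j in ~: L) norm2 (w j).
Proof.
move=> cardL.
have sum_u : \sum_(i in L) norm2 (u i) <= \sum_(i in L)
    (\sum_(j in ~: L) mu B i j * norm2 (w j) + \sum_(i' in L :\ i) mu B i i' * norm2 (u i')).
  by apply: ler_sum => i; apply: norm2_le_mu_sum.
have off_L : \sum_(i in L) \sum_(j in ~: L) mu B i j * norm2 (w j) <=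
             zeta B k * \sum_(j in ~: L) norm2 (w j).
  rewrite exchange_big /= mulr_sumr; apply: ler_sum => j jL.
  rewrite -mulr_suml ler_wpM2r ?norm2_ge0 //.
  under eq_bigr => i _ do rewrite mu_sym.
  by apply: sum_mu_le_zeta; rewrite finset.in_setC in jL.
have in_L : \sum_(i in L) \sum_(i' in L :\ i) mu B i i' * norm2 (u i') <=
            zeta B k.-1 * \sum_(i in L) norm2 (u i).
  rewrite exchange_big_setD1 mulr_sumr; apply: ler_sum => i' i'L.
  rewrite -mulr_suml ler_wpM2r ?norm2_ge0 //.
  under eq_bigr => i _ do rewrite mu_sym.
  apply: sum_mu_le_zeta; last by rewrite !inE eqxx.
  by rewrite -cardL (cardsD1 i' L) i'L.
move: sum_u; rewrite big_split /=; lra.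
Qed.

End BlockSumIdentity.
End Coherence.

Section MatrixFacts.
Variable R : realType.

Lemma big_fibre_inj r p (f : 'I_r -> 'I_p) (g : R -> R) (x : 'I_r -> R) :
  injective f -> g 0 = 0 ->
  \sum_k g (\sum_(a | f a == k) x a) = \sum_a g (x a).
Proof.
move=> f_inj g0; rewrite [RHS](partition_big f predT) //=; apply: eq_bigr => k _.
have [a /eqP fa|no_a] := pickP (fun a => f a == k); last by rewrite !big_pred0.
by rewrite !(big_pred1 a) // => b; rewrite /= -fa (inj_eq f_inj).
Qed.

Lemma colsub1_mulE r p (f : 'I_r -> 'I_p) (u : 'cV[R]_r) k :
  (colsub f 1%:M *m u) k 0 = \sum_(a | f a == k) u a 0.
Proof.
rewrite mxE [RHS]big_mkcond; apply: eq_bigr => a _.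
by rewrite !mxE eq_sym; case: eqP; rewrite ?mul1r ?mul0r.
Qed.

Lemma normq_colsub1_mul q r p (f : 'I_r -> 'I_p) (u : 'cV[R]_r) : injective f -> 0 < q ->
  normq q (colsub f 1%:M *m u) = normq q u.
Proof.
move=> f_inj q0; rewrite !normqE /sum_powq.
under eq_bigr => k _ do rewrite colsub1_mulE.
by rewrite (big_fibre_inj (g := fun t : R => powR `|t| q)) // normr0 powR0 ?gt_eqF.
Qed.

Lemma colsub_mul_colsub1 D p r (M : 'M[R]_(D, p)) (f : 'I_r -> 'I_p) :
  colsub f M = M *m colsub f 1%:M.
Proof. by rewrite mulmx_colsub mulmx1. Qed.

Lemma colsub_rank_inj D p (M : 'M[R]_(D, p)) (f : 'I_(\rank M) -> 'I_p) :
  \rank (colsub f M) = \rank M -> injective f.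
Proof.
move=> rk_f a b fab.
have /row_free_inj : row_free (colsub f M)^T by rewrite /row_free mxrank_tr rk_f.
move=> /(_ 1 (delta_mx 0 a) (delta_mx 0 b)).
rewrite -!rowE -!tr_col !col_colsub fab => /(_ erefl) /matrixP /(_ 0 a) /eqP.
by rewrite !mxE !eqxx /=; case: (a =P b); rewrite // oner_eq0.
Qed.

Lemma colsub_rank_span D p (M : 'M[R]_(D, p)) (f : 'I_(\rank M) -> 'I_p) :
  \rank (colsub f M) = \rank M -> forall w : 'cV[R]_p, exists u, M *m w = colsub f M *m u.
Proof.
move=> rk_f w.
have sub_fM : ((colsub f M)^T <= M^T)%MS.
  by rewrite colsub_mul_colsub1 trmx_mul submxMl.
have sub_Mf : (M^T <= (colsub f M)^T)%MS.
  by rewrite -(mxrank_leqif_sup sub_fM).2 !mxrank_tr rk_f.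
have /submxP [X eX] : (w^T *m M^T <= (colsub f M)^T)%MS := submx_trans (submxMl _ _) sub_Mf.
by exists X^T; apply: trmx_inj; rewrite trmx_mul eX trmx_mul trmxK.
Qed.

Definition abs_row_sum_sqr D p (N : 'M[R]_(D, p)) : R := \sum_d (\sum_a `|N d a|) ^+ 2.

Lemma abs_row_sum_sqr_ge0 D p (N : 'M[R]_(D, p)) : 0 <= abs_row_sum_sqr N.
Proof. by apply: sumr_ge0 => d _; apply: sqr_ge0. Qed.

Lemma sqr_norm2_mulmx_le q D p (N : 'M[R]_(D, p)) (c : 'cV[R]_p) : 0 < q ->
  norm2 (N *m c) ^+ 2 <= abs_row_sum_sqr N * normq q c ^+ 2.
Proof.
move=> q0; rewrite sqr_norm2 /abs_row_sum_sqr mulr_suml; apply: ler_sum => d _.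
rewrite -exprMn -[X in X <= _]real_normK ?num_real //.
apply: lerXn2r; rewrite ?nnegrE ?normr_ge0 ?mulr_ge0 ?normq_ge0 ?sumr_ge0 //.
rewrite mxE mulr_suml; apply: le_trans (ler_norm_sum _ _ _) _; apply: ler_sum => a _.
by rewrite normrM ler_wpM2l // normq_entry_le.
Qed.

End MatrixFacts.

Section RipConstants.
Variables (R : realType) (D n : nat) (m : 'I_n -> nat).
Variable B : forall i : 'I_n, 'M[R]_(D, m i).
Variable q : R.
Hypothesis q_gt0 : 0 < q.

Lemma upper_rip_le s s' : upper_rip B q s -> s <= s' -> upper_rip B q s'.
Proof.
by move=> ups ss' i c; apply: le_trans (ups i c) _; rewrite ler_wpM2r ?sqr_ge0 ?lerD2l.
Qed.

Lemma intra_rip_le e e' : intra_rip B q e -> e <= e' -> intra_rip B q e'.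
Proof.
move=> rip ee' i; have [f [rk_f bnd]] := rip i; exists f; split => // cb.
have /andP[lo up] := bnd cb; have N0 := sqr_ge0 (normq q cb); apply/andP; split.
  by apply: le_trans lo; rewrite ler_wpM2r // lerD2l lerN2.
by apply: le_trans up _; rewrite ler_wpM2r // lerD2l.
Qed.

(* Without the two existence lemmas, [sigma_q] and [eps_q] could be infima of empty
   sets, whose junk value is [0]. *)
Lemma upper_rip_exists : exists s, 0 <= s /\ upper_rip B q s.
Proof.
have S0 i : 0 <= abs_row_sum_sqr (B i) by apply: abs_row_sum_sqr_ge0.
exists (\sum_i abs_row_sum_sqr (B i)); split => [|i c]; first exact: sumr_ge0.
apply: le_trans (sqr_norm2_mulmx_le _ _ q_gt0) _; rewrite ler_wpM2r ?sqr_ge0 //.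
by rewrite (bigD1 i) //= addrCA lerDl addr_ge0 ?sumr_ge0.
Qed.

(* On a maximal independent set of columns, the coefficient lift [colsub f 1%:M] is an
   l_q isometry, so the upper bound is inherited from [upper_rip]; the lower bound is void
   since [1 - (1 + s) <= 0]. *)
Lemma intra_rip_of_upper s : 0 <= s -> upper_rip B q s -> intra_rip B q (1 + s).
Proof.
move=> s0 ups i; rewrite -(mxrank_tr (B i)); exists (maxrankfun (B i)^T); split.
  rewrite -mxrank_tr trmx_mxsub; apply/eqmx_rank/eqmxP; exact: eq_maxrowsub.
move=> cb; apply/andP; split.
  by apply: le_trans (sqr_ge0 _); rewrite mulr_le0_ge0 ?sqr_ge0 // subr_le0 lerDl.
rewrite colsub_mul_colsub1 -mulmxA; apply: le_trans (ups i _) _.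
by rewrite normq_colsub1_mul // ?ler_wpM2r ?sqr_ge0 ?lerD2r ?lerDr //; apply: maxrankfun_inj.
Qed.

Lemma intra_rip_exists : exists e, 0 <= e /\ intra_rip B q e.
Proof.
have [s [s0 ups]] := upper_rip_exists.
by exists (1 + s); split; [rewrite addr_ge0 | apply: intra_rip_of_upper].
Qed.

Lemma eps_q_ge0 : 0 <= eps_q B q.
Proof. by apply: lb_le_inf => [|e []//]; have [e ?] := intra_rip_exists; exists e. Qed.

Lemma sigma_q_ge0 : 0 <= sigma_q B q.
Proof. by apply: lb_le_inf => [|s []//]; have [s ?] := upper_rip_exists; exists s. Qed.

Lemma intra_rip_gt_eps e : eps_q B q < e -> intra_rip B q e.
Proof.
move=> lt_e; have [|e0 [_ rip0] /ltW] := inf_lt _ lt_e; last exact: intra_rip_le.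
by have [e0 ?] := intra_rip_exists; exists e0.
Qed.

Lemma upper_rip_gt_sigma s : sigma_q B q < s -> upper_rip B q s.
Proof.
move=> lt_s; have [|s0 [_ ups0] /ltW] := inf_lt _ lt_s; last exact: upper_rip_le.
by have [s0 ?] := upper_rip_exists; exists s0.
Qed.

Lemma inS_intra_rip e i (u : 'cV[R]_D) : intra_rip B q e -> inS B i u ->
  exists v, B i *m v = u /\ (1 - e) * normq q v ^+ 2 <= norm2 u ^+ 2.
Proof.
move=> rip [w ->]; have [f [rk_f bnd]] := rip i.
have [ub ->] := colsub_rank_span rk_f w.
exists (colsub f 1%:M *m ub); split; first by rewrite mulmxA -colsub_mul_colsub1.
rewrite normq_colsub1_mul //; last exact: colsub_rank_inj rk_f.
by case/andP: (bnd ub).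
Qed.

End RipConstants.

Section Arithmetic.
Variable R : realType.

Lemma sqrtr_mul_sqr (a x : R) : 0 <= x -> Num.sqrt a * x = Num.sqrt (a * x ^+ 2).
Proof.
move=> x0; have [a_lt0|a0] := ltrP a 0; last by rewrite sqrtrM // sqrtr_sqr ger0_norm.
by rewrite ltr0_sqrtr // mul0r ler0_sqrtr // mulr_le0_ge0 ?sqr_ge0 // ltW.
Qed.

Lemma coherence_condition_sqr (E S Z0 Z1 : R) : 0 <= E -> 0 <= S -> 0 <= Z0 -> 0 <= Z1 ->
  Num.sqrt ((1 + S) / (1 + E)) * Z1 + Z0 < (1 - E) / (1 + E) ->
  Z0 < 1 /\ Z1 ^+ 2 * (1 + S) < (1 - E) * (1 - Z0) ^+ 2.
Proof.
move=> E0 S0 Z00 Z10; have E1 : 0 < 1 + E by rewrite ltr_wpDr.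
have ha : Num.sqrt ((1 + S) / (1 + E)) ^+ 2 * (1 + E) = 1 + S.
  by rewrite sqr_sqrtr ?divfK ?gt_eqF // divr_ge0 ?addr_ge0 // ltW.
have hr : (1 - E) / (1 + E) * (1 + E) = 1 - E by rewrite divfK ?gt_eqF.
have a0 := sqrtr_ge0 ((1 + S) / (1 + E)).
move: (Num.sqrt _) ((1 - E) / (1 + E)) ha hr a0 => a r ha hr a0 cond.
have r1 : r <= 1 by nra.
have aZ : 0 <= a * Z1 by apply: mulr_ge0.
split; first by lra.
have h1 : (a * Z1) ^+ 2 < (r - Z0) ^+ 2 by nra.
(* [(r - Z0)^2 <= r (1 - Z0)^2] because [Z0^2 <= Z0 < r <= 1] *)
have h2 : (r - Z0) ^+ 2 <= r * (1 - Z0) ^+ 2.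
  have : 0 <= (1 - r) * (r - Z0 ^+ 2) by apply: mulr_ge0; nra.
  have -> : r * (1 - Z0) ^+ 2 = (r - Z0) ^+ 2 + (1 - r) * (r - Z0 ^+ 2) by ring.
  lra.
have -> : Z1 ^+ 2 * (1 + S) = (a * Z1) ^+ 2 * (1 + E) by rewrite -ha; ring.
have -> : (1 - E) * (1 - Z0) ^+ 2 = r * (1 - Z0) ^+ 2 * (1 + E) by rewrite -hr; ring.
nra.
Qed.

(* The condition is strict, so it survives replacing [E] and [S] by slightly larger [e], [s];
   this is needed because [eps_q] and [sigma_q] are infima that need not be attained. *)
Lemma coherence_condition_slack (E S Z0 Z1 : R) :
  0 <= E -> 0 <= S -> 0 <= Z0 -> 0 <= Z1 ->
  Num.sqrt ((1 + S) / (1 + E)) * Z1 + Z0 < (1 - E) / (1 + E) ->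
  exists e s, [/\ E < e, S < s, Z0 < 1 &
                  Num.sqrt (1 + s) * Z1 < Num.sqrt (1 - e) * (1 - Z0)].
Proof.
move=> E0 S0 Z00 Z10 /coherence_condition_sqr[] // Z01 gap.
have : 0 < 1 - Z0 by rewrite subr_gt0.
move: (1 - Z0) gap => W gap W_gt0.
pose d := ((1 - E) * W ^+ 2 - Z1 ^+ 2 * (1 + S)) / (W ^+ 2 + Z1 ^+ 2 + 1).
have den_gt0 : 0 < W ^+ 2 + Z1 ^+ 2 + 1 by rewrite ltr_wpDl ?addr_ge0 ?sqr_ge0.
have d_gt0 : 0 < d by rewrite divr_gt0 // subr_gt0.
have d_den : d * (W ^+ 2 + Z1 ^+ 2 + 1) = (1 - E) * W ^+ 2 - Z1 ^+ 2 * (1 + S).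
  by rewrite divfK ?gt_eqF.
have gap' : (1 + (S + d)) * Z1 ^+ 2 < (1 - (E + d)) * W ^+ 2 by nra.
exists (E + d), (S + d); split; rewrite ?ltrDl //.
have e_lt1 : 0 < 1 - (E + d) by nra.
by rewrite !sqrtr_mul_sqr ?(ltW W_gt0) // ltr_sqrt ?mulr_gt0 ?exprn_gt0.
Qed.

Lemma ler_cancel_split (o o' x y x' z d : R) : o <= o' -> o = x + y -> o' = x' + z ->
  z = 0 -> x' <= x + d -> y <= d.
Proof. lra. Qed.

Lemma chain_mul_le (al ga W Z1 A C U V : R) : 0 <= al -> 0 <= W -> 0 <= Z1 -> 0 < C ->
  C <= A -> al * A <= U -> W * U <= Z1 * V -> V <= ga * C -> al * W <= ga * Z1.
Proof.
move=> al0 W0 Z10 C0 CA AU UV VC; rewrite -(ler_pM2r C0).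
have := ler_wpM2l (mulr_ge0 al0 W0) CA; have := ler_wpM2l W0 AU.
have := ler_wpM2l Z10 VC; nra.
Qed.

End Arithmetic.

Section Recovery.
Variables (R : realType) (D n : nat) (m : 'I_n -> nat).
Variable B : forall i : 'I_n, 'M[R]_(D, m i).
Variable q : R.
Hypothesis q_ge1 : 1 <= q.

Let q_gt0 : 0 < q := lt_le_trans ltr01 q_ge1.

Lemma optimal_off_support_le (L : {set 'I_n}) y c (v : forall i, 'cV[R]_(m i)) :
  optimal_lq_l1 B q y c -> y = \sum_(i in L) B i *m (c i + v i) ->
  \sum_(i in ~: L) normq q (c i) <= \sum_(i in L) normq q (v i).
Proof.
move=> [_ c_min] y_eq; pose c' i := if i \in L then c i + v i else 0.
have c'_feas : feasible B y c'.
  rewrite /feasible (big_setC_split L) [X in _ + X]big1 ?addr0 => [|i].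
    by rewrite y_eq; apply: eq_bigr => i iL; rewrite /c' iL.
  by rewrite finset.in_setC /c' => /negbTE ->; rewrite mulmx0.
have c'_L : \sum_(i in L) normq q (c' i) <=
            \sum_(i in L) normq q (c i) + \sum_(i in L) normq q (v i).
  by rewrite -big_split; apply: ler_sum => i iL; rewrite /c' iL ler_normqD.
have c'_off : \sum_(i in ~: L) normq q (c' i) = 0.
  by apply: big1 => i; rewrite finset.in_setC /c' => /negbTE ->; rewrite normq0 // gt_eqF.
have obj_c : objective q c = \sum_(i in L) normq q (c i) + \sum_(i in ~: L) normq q (c i).
  exact: big_setC_split.
have obj_c' : objective q c' = \sum_(i in L) normq q (c' i) + \sum_(i in ~: L) normq q (c' i).
  exact: big_setC_split.
exact: ler_cancel_split (c_min c' c'_feas) obj_c obj_c' c'_off c'_L.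
Qed.

Lemma off_support_coherence_bound e s k (L : {set 'I_n}) y c :
  intra_rip B q e -> upper_rip B q s -> 0 <= s -> #|L| = k -> zeta B k.-1 <= 1 ->
  (exists t : 'I_n -> 'cV[R]_D,
     (forall i, i \in L -> inS B i (t i)) /\ y = \sum_(i in L) t i) ->
  optimal_lq_l1 B q y c -> 0 < \sum_(i in ~: L) normq q (c i) ->
  Num.sqrt (1 - e) * (1 - zeta B k.-1) <= Num.sqrt (1 + s) * zeta B k.
Proof.
move=> rip ups s0 cardL Z0_le1 [t [t_in y_eq]] opt C_gt0.
pose u i := t i - B i *m c i.
have u_in i : i \in L -> inS B i (u i).
  by move=> iL; have [w tw] := t_in i iL; exists (w - c i); rewrite /u tw mulmxBr.
have [v v_spec] : exists v : forall i, 'cV[R]_(m i), forall i, i \in L ->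
    B i *m v i = u i /\ (1 - e) * normq q (v i) ^+ 2 <= norm2 (u i) ^+ 2.
  have v_ex i : exists vi : 'cV[R]_(m i), i \in L ->
      B i *m vi = u i /\ (1 - e) * normq q vi ^+ 2 <= norm2 (u i) ^+ 2.
    have [iL|] := boolP (i \in L); last by exists 0.
    by have [vi ?] := inS_intra_rip q_gt0 rip (u_in i iL); exists vi.
  by exists (fun i => projT1 (cid (v_ex i))) => i; case: (cid (v_ex i)).
have sum_u : \sum_(i in L) u i = \sum_(j in ~: L) B j *m c j.
  rewrite /u sumrB -y_eq; have := opt.1; rewrite /feasible (big_setC_split L) => ->.
  by rewrite addrC addKr.
have C_le_A : \sum_(i in ~: L) normq q (c i) <= \sum_(i in L) normq q (v i).
  apply: optimal_off_support_le opt _; rewrite y_eq; apply: eq_bigr => i iL.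
  by rewrite mulmxDr (v_spec i iL).1 /u addrC subrK.
have w_in j : j \notin L -> inS B j (B j *m c j) by exists (c j).
have coh := coherence_sum_bound u_in w_in sum_u cardL.
have lower : Num.sqrt (1 - e) * \sum_(i in L) normq q (v i) <= \sum_(i in L) norm2 (u i).
  rewrite mulr_sumr; apply: ler_sum => i iL.
  rewrite sqrtr_mul_sqr ?normq_ge0 // -[leRHS]ger0_norm ?norm2_ge0 // -sqrtr_sqr.
  by rewrite ler_sqrt ?sqr_ge0 // (v_spec i iL).2.
have upper : \sum_(j in ~: L) norm2 (B j *m c j) <=
             Num.sqrt (1 + s) * \sum_(j in ~: L) normq q (c j).
  rewrite mulr_sumr; apply: ler_sum => j _.
  rewrite sqrtr_mul_sqr ?normq_ge0 // -[leLHS]ger0_norm ?norm2_ge0 // -sqrtr_sqr.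
  rewrite ler_sqrt; first exact: ups.
  by rewrite mulr_ge0 ?sqr_ge0 // addr_ge0.
have W0 : 0 <= 1 - zeta B k.-1 by rewrite subr_ge0.
exact: chain_mul_le (sqrtr_ge0 _) W0 (zeta_ge0 B k) C_gt0 C_le_A lower coh upper.
Qed.

End Recovery.

Theorem proposition3 (R : realType) (D n : nat) (m : 'I_n -> nat)
  (B : forall i : 'I_n, 'M[R]_(D, m i)) (q : R) (k : nat)
  (hq : 1 <= q) (hk0 : (0 < k)%N) (hkn : (k < n)%N)
  (hcol : forall (i : 'I_n) (j : 'I_(m i)), norm2 (col j (B i)) = 1)
  (hinter : forall i j : 'I_n, i != j ->
     forall x : 'cV[R]_D, inS B i x -> inS B j x -> x = 0)
  (huniq : unique_block_sparse B k)
  (hcond : Num.sqrt ((1 + sigma_q B q) / (1 + eps_q B q)) * zeta B k + zeta B k.-1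
           < (1 - eps_q B q) / (1 + eps_q B q))
  (L : {set 'I_n}) (hL : #|L| = k) (y : 'cV[R]_D)
  (hy : exists s : 'I_n -> 'cV[R]_D,
          (forall i, i \in L -> inS B i (s i)) /\ y = \sum_(i in L) s i)
  (c : forall i : 'I_n, 'cV[R]_(m i))
  (hopt : optimal_lq_l1 B q y c) :
  forall i : 'I_n, i \notin L -> c i = 0.
Proof.
move=> i0 i0L; apply/eqP; apply: contraT => ci0.
have q_gt0 : 0 < q by apply: lt_le_trans hq.
have [e [s [lt_e lt_s Z0_lt1 slack]]] := coherence_condition_slack (eps_q_ge0 B q_gt0)
  (sigma_q_ge0 B q_gt0) (zeta_ge0 B k.-1) (zeta_ge0 B k) hcond.
have C_gt0 : 0 < \sum_(i in ~: L) normq q (c i).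
  have ci0_gt0 : 0 < normq q (c i0).
    rewrite lt_def normq_ge0 andbT.
    by apply: contraNneq ci0 => /(normq_eq0 (lt0r_neq0 q_gt0)) ->.
  apply: lt_le_trans ci0_gt0 _; rewrite (bigD1 i0) ?finset.in_setC //= lerDl.
  by apply: sumr_ge0 => i _; apply: normq_ge0.
have s_ge0 : 0 <= s := le_trans (sigma_q_ge0 B q_gt0) (ltW lt_s).
have := off_support_coherence_bound hq (intra_rip_gt_eps q_gt0 lt_e)
  (upper_rip_gt_sigma q_gt0 lt_s) s_ge0 hL (ltW Z0_lt1) hy hopt C_gt0.
by move/(lt_le_trans slack); rewrite ltxx.
Qed.
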